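(* Let $n\geq 2$ and let $G$ be the Coxeter group with generators $t_0,t_1,\dots,t_{n-1}$ and relations $t_j^2=1$ for all $j$; $(t_0t_2)^4=1$ (if $n\geq 3$); $(t_0t_j)^2=1$ for $3\leq j\leq n-1$; $(t_it_{i+1})^3=1$ for $1\leq i\leq n-2$; $(t_it_j)^2=1$ for $1\leq i,j\leq n-1$ with $|i-j|\geq 2$; and no relation between $t_0$ and $t_1$ (i.e. $m(t_0,t_1)=\infty$). Then the assignment $t_0\mapsto\sigma_{12}$, $t_i\mapsto\alpha_{(i,i+1)}$ ($1\leq i\leq n-1$) extends to a surjective homomorphism $G\to\mathrm{Aut}(W_n)$. Moreover, the subgroup of $\mathrm{Aut}(W_n)$ generated by $\{\sigma_{12}\}\cup\{\alpha_{(i,i+1)}\mid i=2,\dots,n-1\}$ is finite.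
   Context: $W_n=\langle s_1,\dots,s_n\mid s_1^2,\dots,s_n^2\rangle$. For $1\leq i\neq j\leq n$, $\sigma_{ij}\in\mathrm{Aut}(W_n)$ is defined by $\sigma_{ij}(s_j)=s_is_js_i$ and $\sigma_{ij}(s_k)=s_k$ for $k\neq j$. For $\pi\in\mathrm{Sym}(n)$, $\alpha_\pi\in\mathrm{Aut}(W_n)$ is defined by $\alpha_\pi(s_k)=s_{\pi(k)}$. *)

From HB Require Import structures.
From mathcomp Require Import all_boot all_fingroup.
Set Implicit Arguments. Unset Strict Implicit. Unset Printing Implicit Defensive.

(* Generators s_1,...,s_n are encoded (0-indexed) by 'I_n.  Elements of W_n
   are the reduced words (no two adjacent letters equal), the standard normal
   form in the free product of n copies of Z/2. *)

Definition reducedb n (w : seq 'I_n) : bool := sorted (fun a b => a != b) w.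

Definition push n (a : 'I_n) (s : seq 'I_n) : seq 'I_n :=
  match s with
  | b :: s' => if a == b then s' else a :: s
  | [::] => [:: a]
  end.

Definition red n (w : seq 'I_n) : seq 'I_n := foldr (@push n) [::] w.

Lemma red_reduced n (w : seq 'I_n) : reducedb (red w).
Proof.
rewrite /reducedb; elim: w => [|a w IH] //=.
case: (red w) IH => [|b s] //= Hs.
case: eqP => [_|/eqP ab]; first exact: (path_sorted Hs).
by rewrite /= ab Hs.
Qed.

Definition W n := {w : seq 'I_n | reducedb w}.

Definition mkW n (w : seq 'I_n) : W n := exist _ (red w) (red_reduced w).

Definition wmul n (x y : W n) : W n := mkW (sval x ++ sval y).

Definition wgen n (i : 'I_n) : W n := mkW [:: i].

Definition is_aut n (f : W n -> W n) : Prop :=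
  (forall x y, f (wmul x y) = wmul (f x) (f y)) /\ bijective f.

Definition sigma_map n (i j : 'I_n) (x : W n) : W n :=
  mkW (flatten (map (fun k => if k == j then [:: i; j; i] else [:: k]) (sval x))).

Definition alpha_map n (p : {perm 'I_n}) (x : W n) : W n :=
  mkW (map p (sval x)).

(* Generators t_0,...,t_{n-1} encoded by 'I_n (same indexing as the paper).
   Coxeter matrix m(i,j), None = infinity. *)
Definition coxm (i j : nat) : option nat :=
  if i == j then Some 1
  else if (i == 0) && (j == 1) || (i == 1) && (j == 0) then None
  else if (i == 0) && (j == 2) || (i == 2) && (j == 0) then Some 4
  else if (i == 0) || (j == 0) then Some 2          (* t_0 with t_j, j >= 3 *)
  else if (i == j.+1) || (j == i.+1) then Some 3    (* adjacent, both >= 1 *)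
  else Some 2.                                      (* |i-j| >= 2, both >= 1 *)

Inductive relator n : seq 'I_n -> Prop :=
  | rel_sq (j : 'I_n) : relator [:: j; j]
  | rel_cox (i j : 'I_n) (k : nat) :
      i != j -> coxm i j = Some k -> relator (flatten (nseq k [:: i; j])).

(* the congruence on words defining G (words in the t_j; since all t_j are
   involutions, G is the quotient of the free monoid by this congruence) *)
Inductive cox_eq n : seq 'I_n -> seq 'I_n -> Prop :=
  | ce_refl u : cox_eq u u
  | ce_sym u v : cox_eq u v -> cox_eq v u
  | ce_trans u v w : cox_eq u v -> cox_eq v w -> cox_eq u w
  | ce_rel u r v : relator r -> cox_eq (u ++ r ++ v) (u ++ v).

(* t_0 |-> sigma_{12}, t_k |-> alpha_{(k,k+1)} (paper's 1-indexed s's),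
   i.e. 0-indexed: sigma (0,1), tperm (k-1) k. *)
Definition gen_img m (k : 'I_m.+2) : W m.+2 -> W m.+2 :=
  if val k == 0 then sigma_map ord0 (inord 1)
  else alpha_map (tperm (inord k.-1) k).

Definition ev m (u : seq 'I_m.+2) : W m.+2 -> W m.+2 :=
  foldr (fun k f => gen_img k \o f) id u.

From HB Require Import structures.
From mathcomp Require Import all_boot all_fingroup zify.
Set Implicit Arguments. Unset Strict Implicit. Unset Printing Implicit Defensive.

(* An endomorphism of W_n is a substitution s_k |-> X_k; it is an automorphism
   only if each X_k is a reduced odd palindrome (a conjugate of a generator).
   The relations of G are checked directly: the images of t_1, ..., t_(n-1) are the
   Coxeter generators of Sym(n), and alpha_(12) conjugates sigma_(01) into the
   partial conjugation sigma_(02), which commutes with it.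
   Surjectivity is Nielsen reduction on the total length of the X_k: if no X_l
   begins with the first half of some X_k up to its centre, the centres survive
   in every product, so f^-1 maps letters to letters and f is a permutation;
   otherwise X_k X_l X_k is shorter than X_l and composing f with sigma_kl
   shortens f.  Every sigma_kl is conjugate to sigma_(01) by a permutation.
   For finiteness, without t_1 all permutations fix s_0, so every product of the
   remaining generators conjugates a subset of the letters by s_0 and then
   permutes the letters: there are finitely many such maps. *)

Ltac eqsimp := repeat (progress (rewrite /=) || rewrite eqxx ||
  match goal with
  | H : is_true (?a != ?b) |- context [?a == ?b] => rewrite (negbTE H)
  | H : is_true (?a != ?b) |- context [?b == ?a] => rewrite [b == a]eq_sym (negbTE H)
  end).

Section FreeReduction.
Variable n : nat.
Implicit Types (a b : 'I_n) (s t u v : seq 'I_n).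

Lemma reduced_cons a s :
  reducedb (a :: s) = reducedb s && (if s is b :: _ then a != b else true).
Proof. by case: s => [|b s] //=; rewrite andbC. Qed.

Lemma red_id s : reducedb s -> red s = s.
Proof.
elim: s => [|a s IH] //; rewrite reduced_cons => /andP[Hs Ha].
by rewrite /= IH //; case: s {IH Hs} Ha => [|b s] //= /negbTE ->.
Qed.

Lemma red_idem s : red (red s) = red s.
Proof. exact/red_id/red_reduced. Qed.

Lemma pushK a t : reducedb t -> push a (push a t) = t.
Proof.
case: t => [|b t] /=; first by rewrite eqxx.
case: eqP => [<-|/eqP ab] /=; last by rewrite eqxx.
by case: t => [|c t] //= /andP[/negbTE ->].
Qed.

Lemma red_push_cat a s v : red (push a s ++ v) = push a (red (s ++ v)).
Proof.
case: s => [|b s] //=; case: eqP => [<-|_] //=.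
by rewrite pushK // red_reduced.
Qed.

Lemma red_catr u v : red (u ++ red v) = red (u ++ v).
Proof. by elim: u => [|a u IH] /=; [apply: red_idem | rewrite IH]. Qed.

Lemma red_catl u v : red (red u ++ v) = red (u ++ v).
Proof. by elim: u => [|a u IH] //=; rewrite red_push_cat IH. Qed.

Lemma red_cat_congr u v s t :
  red s = red t -> red (u ++ s ++ v) = red (u ++ t ++ v).
Proof.
by move=> E; rewrite -(red_catr u (s ++ v)) -(red_catl s v) E red_catl red_catr.
Qed.

Lemma red_rev_cat t : red (rev t ++ t) = [::].
Proof.
elim: t => [|x t IH] //.
rewrite rev_cons -cats1 -catA -[RHS]IH -[rev t ++ t]/(rev t ++ [::] ++ t).
by rewrite -[[:: x] ++ _]/([:: x; x] ++ t); apply: red_cat_congr => /=; rewrite eqxx.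
Qed.

Lemma red_cat_rev t : red (t ++ rev t) = [::].
Proof. by rewrite -{1}(revK t) red_rev_cat. Qed.

Lemma size_red s : size (red s) <= size s.
Proof.
elim: s => [|a s IH] //=; apply: leq_trans (_ : (size (red s)).+1 <= _) => //.
by case: (red s) => [|b r] //=; case: eqP => //= _; lia.
Qed.

Lemma reduced_nth x0 s i : reducedb s -> i.+1 < size s ->
  nth x0 s i != nth x0 s i.+1.
Proof. by case: s => [|a s] //= /(pathP x0); apply. Qed.

Lemma reduced_rev s : reducedb s -> reducedb (rev s).
Proof. by rewrite /reducedb rev_sorted; apply: sub_sorted => a b; rewrite eq_sym. Qed.

Lemma reduced_rcons_cat s a b t : reducedb (rcons s a) -> reducedb (b :: t) ->
  a != b -> reducedb (rcons s a ++ b :: t).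
Proof.
case: s => [|c s] /=; first by move=> _ -> ->.
by rewrite /reducedb /= cat_path last_rcons => -> /= -> ->.
Qed.

End FreeReduction.

Section UniversalCoxeterGroup.
Variable n : nat.
Implicit Types (x y z : W n) (s t : seq 'I_n).

Lemma mkW_val x : mkW (sval x) = x.
Proof. by apply: val_inj; rewrite /= red_id //; case: x. Qed.

Lemma wmul_mkW s t : wmul (mkW s) (mkW t) = mkW (s ++ t).
Proof. by apply: val_inj; rewrite /= red_catl red_catr. Qed.

Lemma mkW_cons a s : mkW (a :: s) = wmul (wgen a) (mkW s).
Proof. by rewrite /wgen wmul_mkW. Qed.

Lemma wmulA x y z : wmul x (wmul y z) = wmul (wmul x y) z.
Proof. by rewrite -(mkW_val x) -(mkW_val y) -(mkW_val z) !wmul_mkW catA. Qed.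

Definition wone : W n := mkW [::].
Definition winv x : W n := mkW (rev (sval x)).

Lemma wmul1w x : wmul wone x = x.
Proof. by rewrite -(mkW_val x) wmul_mkW. Qed.

Lemma wmulVw x : wmul (winv x) x = wone.
Proof. by rewrite /winv -{2}(mkW_val x) wmul_mkW; apply: val_inj; rewrite /= red_rev_cat. Qed.

Lemma wmul_idem x : wmul x x = x -> x = wone.
Proof.
move=> xx; have : wmul (winv x) (wmul x x) = wmul (winv x) x by rewrite xx.
by rewrite wmulA wmulVw wmul1w.
Qed.

Lemma wgen_sq a : wmul (wgen a) (wgen a) = wone.
Proof. by apply: val_inj => /=; rewrite eqxx. Qed.

End UniversalCoxeterGroup.

(* wsubst phi is an endomorphism of W_n as soon as every phi k is an involution *)
Definition wsubst n (phi : 'I_n -> seq 'I_n) (x : W n) : W n :=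
  mkW (flatten (map phi (sval x))).

Definition involutive_subst n (phi : 'I_n -> seq 'I_n) :=
  forall k, red (phi k ++ phi k) = [::].

Section Substitutions.
Variable n : nat.
Implicit Types (phi psi : 'I_n -> seq 'I_n) (s t : seq 'I_n).

Lemma flatten_map_cat phi s t :
  flatten (map phi (s ++ t)) = flatten (map phi s) ++ flatten (map phi t).
Proof. by rewrite map_cat flatten_cat. Qed.

Lemma flatten_map_flatten phi psi s :
  flatten (map phi (flatten (map psi s))) =
  flatten (map (fun k => flatten (map phi (psi k))) s).
Proof. by elim: s => [|a s IH] //=; rewrite flatten_map_cat IH. Qed.

Lemma red_flatten_ext phi psi s : (forall k, red (phi k) = red (psi k)) ->
  red (flatten (map phi s)) = red (flatten (map psi s)).
Proof.
move=> E; elim: s => [|a s IH] //=.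
by rewrite -red_catl -red_catr IH E red_catl red_catr.
Qed.

End Substitutions.

Section InvolutiveSubstitution.
Variables (n : nat) (phi : 'I_n -> seq 'I_n).
Hypothesis phi_inv : involutive_subst phi.
Implicit Types (psi : 'I_n -> seq 'I_n) (s : seq 'I_n) (x y : W n).

Lemma red_flatten_red s :
  red (flatten (map phi (red s))) = red (flatten (map phi s)).
Proof.
elim: s => [|a s IH] //=; rewrite -red_catr -IH red_catr.
case: (red s) => [|b r] //=; case: eqP => [<-|_] //=.
rewrite catA -[RHS]/(red ([::] ++ (phi a ++ phi a) ++ _)).
by rewrite (@red_cat_congr _ [::] _ _ [::] (phi_inv a)).
Qed.

Lemma wsubst_mkW s : wsubst phi (mkW s) = mkW (flatten (map phi s)).
Proof. by apply: val_inj; rewrite /= red_flatten_red. Qed.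

Lemma wsubst_morph x y : wsubst phi (wmul x y) = wmul (wsubst phi x) (wsubst phi y).
Proof.
by apply: val_inj; rewrite /= red_flatten_red red_catl red_catr flatten_map_cat.
Qed.

Lemma wsubst_comp psi x :
  wsubst phi (wsubst psi x) = wsubst (fun k => flatten (map phi (psi k))) x.
Proof. by apply: val_inj; rewrite /= red_flatten_red flatten_map_flatten. Qed.

End InvolutiveSubstitution.

Lemma wsubst_ext n (phi psi : 'I_n -> seq 'I_n) x :
  (forall k, red (phi k) = red (psi k)) -> wsubst phi x = wsubst psi x.
Proof. by move=> E; apply: val_inj; rewrite /= (red_flatten_ext _ E). Qed.

Lemma wsubst_letters n (x : W n) : wsubst (fun k => [:: k]) x = x.
Proof. by rewrite /wsubst flatten_seq1 mkW_val. Qed.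

Definition sigma_subst n (i j : 'I_n) (k : 'I_n) : seq 'I_n :=
  if k == j then [:: i; j; i] else [:: k].

Section PartialConjugationsAndPermutations.
Variable n : nat.
Implicit Types (i j k l : 'I_n) (p q : {perm 'I_n}) (x : W n).

Lemma sigma_mapE i j x : sigma_map i j x = wsubst (sigma_subst i j) x.
Proof. by []. Qed.

Lemma alpha_mapE p x : alpha_map p x = wsubst (fun k => [:: p k]) x.
Proof. by rewrite /alpha_map /wsubst flatten_map1. Qed.

Lemma sigma_subst_inv i j : involutive_subst (sigma_subst i j).
Proof.
move=> k; rewrite /sigma_subst; case: eqP => _ /=; last by rewrite eqxx.
by case: (eqVneq i j) => [->|ij]; eqsimp.
Qed.

Lemma perm_subst_inv p : involutive_subst (fun k => [:: p k]).
Proof. by move=> k /=; rewrite eqxx. Qed.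

Lemma sigma_mapK i j : i != j -> involutive (sigma_map i j).
Proof.
move=> ij x; rewrite !sigma_mapE (wsubst_comp (sigma_subst_inv i j)).
rewrite -[RHS]wsubst_letters; apply: wsubst_ext => k; rewrite /sigma_subst.
by case: (eqVneq k j) => [->|kj]; eqsimp.
Qed.

Lemma sigma_map_morph i j x y :
  sigma_map i j (wmul x y) = wmul (sigma_map i j x) (sigma_map i j y).
Proof. exact/wsubst_morph/sigma_subst_inv. Qed.

Lemma alpha_map_morph p x y :
  alpha_map p (wmul x y) = wmul (alpha_map p x) (alpha_map p y).
Proof. by rewrite !alpha_mapE (wsubst_morph (perm_subst_inv p)). Qed.

Lemma alpha_mapM p q x : alpha_map p (alpha_map q x) = alpha_map (q * p)%g x.
Proof.
rewrite !alpha_mapE (wsubst_comp (perm_subst_inv p)).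
by apply: wsubst_ext => k /=; rewrite permM.
Qed.

Lemma alpha_map1 x : alpha_map 1%g x = x.
Proof.
rewrite alpha_mapE -[RHS]wsubst_letters.
by apply: wsubst_ext => k; rewrite perm1.
Qed.

Lemma alpha_map_iter p e x :
  iter e (alpha_map p) x = alpha_map (p ^+ e)%g x.
Proof.
elim: e => [|e IH] /=; first by rewrite expg0 alpha_map1.
by rewrite IH alpha_mapM expgSr.
Qed.

Lemma alpha_sigma p i j x :
  alpha_map p (sigma_map i j x) = sigma_map (p i) (p j) (alpha_map p x).
Proof.
rewrite !alpha_mapE !sigma_mapE (wsubst_comp (perm_subst_inv p))
  (wsubst_comp (sigma_subst_inv _ _)).
by apply: wsubst_ext => k /=; rewrite /sigma_subst (inj_eq perm_inj); case: eqP.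
Qed.

Lemma sigma_map_comm i j l x : i != j -> i != l -> j != l ->
  sigma_map i j (sigma_map i l x) = sigma_map i l (sigma_map i j x).
Proof.
move=> ij il jl; rewrite !sigma_mapE !(wsubst_comp (sigma_subst_inv _ _)).
apply: wsubst_ext => k /=; rewrite /sigma_subst.
by case: (eqVneq k l) => kl; case: (eqVneq k j) => kj; subst; eqsimp.
Qed.

End PartialConjugationsAndPermutations.

Section Transpositions.
Variable T : finType.
Implicit Types x y z t w : T.

Lemma tperm_eval x y w : tperm x y w = if w == x then y else if w == y then x else w.
Proof.
by case: tpermP => [->|->|/eqP/negbTE -> /eqP/negbTE ->]; rewrite ?eqxx //; case: eqP.
Qed.

Ltac tperm_simpl := do 6 (rewrite ?tperm_eval; eqsimp).

Lemma tperm_braid_order x y z : x != y -> y != z -> x != z ->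
  ((tperm y z * tperm x y) ^+ 3 = 1)%g.
Proof.
move=> xy yz xz; apply/permP => w; rewrite !expgS expg0 mulg1 !permM perm1.
by case: (eqVneq w x) => [->|wx]; [|case: (eqVneq w y) => [->|wy];
  [|case: (eqVneq w z) => [->|wz]]]; tperm_simpl.
Qed.

Lemma tperm_disjoint_order x y z t : x != y -> x != z -> x != t ->
  y != z -> y != t -> z != t -> ((tperm z t * tperm x y) ^+ 2 = 1)%g.
Proof.
move=> xy xz xt yz yt zt; apply/permP => w; rewrite !expgS expg0 mulg1 !permM perm1.
by case: (eqVneq w x) => [->|wx]; [|case: (eqVneq w y) => [->|wy];
  [|case: (eqVneq w z) => [->|wz]; [|case: (eqVneq w t) => [->|wt]]]]; tperm_simpl.
Qed.

End Transpositions.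

Section GeneratorImages.
Variable m : nat.
Implicit Types (i j k : 'I_m.+2) (u v : seq 'I_m.+2) (x : W m.+2).

Lemma inord1_val : nat_of_ord (inord 1 : 'I_m.+2) = 1.
Proof. by rewrite inordK. Qed.

Lemma inord_pred_val k : nat_of_ord (inord k.-1 : 'I_m.+2) = k.-1.
Proof. by rewrite inordK //; have := ltn_ord k; lia. Qed.

Lemma ord_neq i j : nat_of_ord i != nat_of_ord j -> i != j.
Proof. by apply: contra => /eqP ->. Qed.

Lemma ord0_neq1 : (ord0 : 'I_m.+2) != inord 1.
Proof. by apply: ord_neq; rewrite inord1_val. Qed.

Lemma gen_img0 k x : nat_of_ord k = 0 -> gen_img k x = sigma_map ord0 (inord 1) x.
Proof. by move=> k0; rewrite /gen_img /= k0. Qed.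

Lemma gen_imgS k x : nat_of_ord k != 0 -> gen_img k x = alpha_map (tperm (inord k.-1) k) x.
Proof. by move=> /negbTE k0; rewrite /gen_img /= k0. Qed.

Lemma gen_imgK k : involutive (gen_img k).
Proof.
move=> x; case: (eqVneq (nat_of_ord k) 0) => k0.
  by rewrite !gen_img0 // sigma_mapK // ord0_neq1.
by rewrite !gen_imgS // alpha_mapM tperm2 alpha_map1.
Qed.

Lemma gen_img_morph k x y : gen_img k (wmul x y) = wmul (gen_img k x) (gen_img k y).
Proof.
case: (eqVneq (nat_of_ord k) 0) => k0; first by rewrite !gen_img0 // sigma_map_morph.
by rewrite !gen_imgS // alpha_map_morph.
Qed.

Lemma gen_img_aut k : is_aut (gen_img k).
Proof. by split; [exact: gen_img_morph | exists (gen_img k); apply: gen_imgK]. Qed.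

Lemma ev_cat u v x : ev (u ++ v) x = ev u (ev v x).
Proof. by elim: u => [|a u IH] //=; rewrite IH. Qed.

Definition gen_pair i j x := gen_img i (gen_img j x).

Lemma ev_pair_power i j e x :
  ev (flatten (nseq e [:: i; j])) x = iter e (gen_pair i j) x.
Proof. by elim: e => [|e IH] //=; rewrite -IH. Qed.

Lemma gen_pair_order_sym i j e :
  (forall x, iter e (gen_pair i j) x = x) -> forall x, iter e (gen_pair j i) x = x.
Proof.
move=> ije x; rewrite -{1}(gen_imgK j x).
have conj y : gen_pair j i (gen_img j y) = gen_img j (gen_pair i j y) by [].
have -> : iter e (gen_pair j i) (gen_img j (gen_img j x)) =
          gen_img j (iter e (gen_pair i j) (gen_img j x)).
  by elim: e {ije} => [|e IH] //=; rewrite IH conj.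
by rewrite ije gen_imgK.
Qed.

Section FirstGenerator.
Variable j : 'I_m.+2.
Let t : {perm 'I_m.+2} := tperm (inord j.-1) j.

Lemma gen_pair0E (i : 'I_m.+2) x : nat_of_ord i = 0 -> 2 <= nat_of_ord j ->
  gen_pair i j x = sigma_map ord0 (inord 1) (alpha_map t x).
Proof. by move=> i0 j2; rewrite /gen_pair gen_img0 // gen_imgS //; lia. Qed.

Lemma t_fixes0 : 2 <= nat_of_ord j -> t ord0 = ord0.
Proof. by move=> j2; rewrite tpermD //; apply: ord_neq; rewrite ?inord_pred_val /=; lia. Qed.

Lemma alpha_t_invol x : alpha_map t (alpha_map t x) = x.
Proof. by rewrite alpha_mapM tperm2 alpha_map1. Qed.

(* alpha_(12) conjugates sigma_(01) into sigma_(02), which commutes with sigma_(01) *)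
Lemma gen_pair_order_02 (i : 'I_m.+2) x : nat_of_ord i = 0 -> nat_of_ord j = 2 ->
  iter 4 (gen_pair i j) x = x.
Proof.
move=> i0 j2; rewrite /= !gen_pair0E ?j2 //.
have t1 : t (inord 1) = j.
  suff -> : (inord 1 : 'I_m.+2) = inord j.-1 by rewrite tpermL.
  by apply: val_inj; rewrite /= inord_pred_val inord1_val j2.
have t0 := t_fixes0 (eq_leq (esym j2)).
have o1j : (inord 1 : 'I_m.+2) != j by apply: ord_neq; rewrite inord1_val j2.
have o0j : (ord0 : 'I_m.+2) != j by apply: ord_neq; rewrite j2.
rewrite !(alpha_sigma, t0, t1, alpha_t_invol).
rewrite (@sigma_map_comm _ ord0 j (inord 1)) ?ord0_neq1 // 1?eq_sym //.
by rewrite (sigma_mapK o0j) (sigma_mapK ord0_neq1).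
Qed.

Lemma gen_pair_order_0far (i : 'I_m.+2) x : nat_of_ord i = 0 -> 3 <= nat_of_ord j ->
  iter 2 (gen_pair i j) x = x.
Proof.
move=> i0 j3; have j2 : 2 <= j by lia.
rewrite /= !gen_pair0E //.
have t1 : t (inord 1) = inord 1.
  by rewrite tpermD //; apply: ord_neq; rewrite ?inord_pred_val inord1_val /=; lia.
have t0 : t ord0 = ord0 by apply: t_fixes0; lia.
by rewrite alpha_sigma t0 t1 alpha_t_invol (sigma_mapK ord0_neq1).
Qed.

End FirstGenerator.

Lemma gen_pair_permE i j : nat_of_ord i != 0 -> nat_of_ord j != 0 ->
  gen_pair i j =1 alpha_map (tperm (inord j.-1) j * tperm (inord i.-1) i)%g.
Proof. by move=> i0 j0 x; rewrite /gen_pair !gen_imgS // alpha_mapM. Qed.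

Lemma gen_pair_order_adj i j x : nat_of_ord i != 0 -> nat_of_ord j = (nat_of_ord i).+1 ->
  iter 3 (gen_pair i j) x = x.
Proof.
move=> i0 ji; have j0 : nat_of_ord j != 0 by rewrite ji.
rewrite (eq_iter (gen_pair_permE i0 j0)) alpha_map_iter.
have -> : (inord j.-1 : 'I_m.+2) = i by apply: val_inj; rewrite /= inord_pred_val ji.
rewrite tperm_braid_order ?alpha_map1 //; apply: ord_neq; rewrite ?inord_pred_val; lia.
Qed.

Lemma gen_pair_order_far i j x : nat_of_ord i != 0 -> (nat_of_ord i).+1 < nat_of_ord j ->
  iter 2 (gen_pair i j) x = x.
Proof.
move=> i0 ij; have j0 : nat_of_ord j != 0 by lia.
rewrite (eq_iter (gen_pair_permE i0 j0)) alpha_map_iter tperm_disjoint_order ?alpha_map1 //.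
all: by apply: ord_neq; rewrite ?inord_pred_val; lia.
Qed.

Lemma coxmC a b : coxm a b = coxm b a.
Proof.
rewrite /coxm eq_sym; case: eqP => // _.
by case: a => [|[|[|a]]]; case: b => [|[|[|b]]] //=; rewrite orbC.
Qed.

Lemma gen_pair_order i j e : nat_of_ord i < nat_of_ord j -> coxm i j = Some e ->
  forall x, iter e (gen_pair i j) x = x.
Proof.
move=> ij; rewrite /coxm (_ : nat_of_ord i == nat_of_ord j = false); last by apply/eqP; lia.
case: (eqVneq (nat_of_ord i) 0) => i0.
  rewrite i0 /=; case: (eqVneq (nat_of_ord j) 1) => [-> //|j1].
  case: (eqVneq (nat_of_ord j) 2) => [j2 [<-] x|j2 [<-] x].
    exact: gen_pair_order_02.
  by apply: gen_pair_order_0far => //; lia.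
rewrite (_ : nat_of_ord j == 0 = false) ?andbF /=; last by apply/eqP; lia.
rewrite (_ : nat_of_ord i == (nat_of_ord j).+1 = false) /=; last by apply/eqP; lia.
case: (eqVneq (nat_of_ord j) (nat_of_ord i).+1) => [ji [<-] x|ji [<-] x].
  exact: gen_pair_order_adj.
by apply: gen_pair_order_far => //; lia.
Qed.

Lemma ev_relator r x : relator r -> ev r x = x.
Proof.
case=> [j|i j e ij ije] /=; first by rewrite gen_imgK.
rewrite ev_pair_power.
have [lt|gt] : nat_of_ord i < nat_of_ord j \/ nat_of_ord j < nat_of_ord i.
  by move: ij; rewrite -(inj_eq val_inj) /=; lia.
  exact: gen_pair_order.
by apply: gen_pair_order_sym; apply: gen_pair_order; rewrite // coxmC.
Qed.

Lemma ev_cox_eq u v : cox_eq u v -> forall x, ev u x = ev v x.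
Proof.
elim=> [//|a b _ IH x|a b c _ IH1 _ IH2 x|a r b rel x].
- by rewrite IH.
- by rewrite IH1 IH2.
- by rewrite !ev_cat (ev_relator _ rel).
Qed.

End GeneratorImages.

(* The maps generated by t_0 and the t_k, k >= 2, all have the form
   conj0_map S \o alpha_map p. *)
Definition conj0_subst m (S : {set 'I_m.+2}) (k : 'I_m.+2) : seq 'I_m.+2 :=
  if k \in S then [:: ord0; k; ord0] else [:: k].

Definition conj0_map m (S : {set 'I_m.+2}) : W m.+2 -> W m.+2 :=
  wsubst (conj0_subst S).

Section NoFirstAdjacentTransposition.
Variable m : nat.
Implicit Types (S : {set 'I_m.+2}) (p : {perm 'I_m.+2}) (u : seq 'I_m.+2) (x : W m.+2).

Lemma conj0_subst_inv S : involutive_subst (conj0_subst S).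
Proof.
move=> k; rewrite /conj0_subst; case: (k \in S); last by rewrite /= eqxx.
by case: (eqVneq k ord0) => [->|k0]; eqsimp.
Qed.

Lemma conj0_map0 x : conj0_map set0 x = x.
Proof.
rewrite /conj0_map -[RHS]wsubst_letters.
by apply: wsubst_ext => k; rewrite /conj0_subst inE.
Qed.

Lemma sigma01_conj0 S x :
  sigma_map ord0 (inord 1) (conj0_map S x) =
  conj0_map (if inord 1 \in S then S :\ inord 1 else inord 1 |: S) x.
Proof.
rewrite sigma_mapE /conj0_map (wsubst_comp (sigma_subst_inv _ _)).
have o1 := @ord0_neq1 m.
apply: wsubst_ext => k; rewrite /conj0_subst /sigma_subst.
case S1: (inord 1 \in S); case: (eqVneq k (inord 1)) => [->|k1];
  rewrite ?in_setD1 ?in_setU1 ?eqxx ?S1 ?(negbTE k1) /=; by try case: (k \in S); eqsimp.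
Qed.

Lemma alpha_conj0 p S x : p ord0 = ord0 ->
  alpha_map p (conj0_map S x) = conj0_map (p @: S) (alpha_map p x).
Proof.
move=> p0; rewrite !alpha_mapE /conj0_map (wsubst_comp (perm_subst_inv p)).
rewrite (wsubst_comp (conj0_subst_inv _)); apply: wsubst_ext => k.
by rewrite /conj0_subst /= (mem_imset _ _ (@perm_inj _ p)); case: (k \in S); rewrite /= ?p0.
Qed.

Lemma ev_conj0_alpha u : (forall k, k \in u -> nat_of_ord k != 1) ->
  exists S p, forall x, ev u x = conj0_map S (alpha_map p x).
Proof.
elim: u => [|k u IH] no1.
  by exists set0, 1%g => x; rewrite alpha_map1 conj0_map0.
have [S [p Hp]] : exists S p, forall x, ev u x = conj0_map S (alpha_map p x).
  by apply: IH => l ul; apply: no1; rewrite inE ul orbT.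
have k1 : nat_of_ord k != 1 by apply: no1; rewrite inE eqxx.
case: (eqVneq (nat_of_ord k) 0) => k0.
  exists (if inord 1 \in S then S :\ inord 1 else inord 1 |: S), p => x.
  by rewrite /= Hp gen_img0 // sigma01_conj0.
pose t : {perm 'I_m.+2} := tperm (inord k.-1) k.
have t0 : t ord0 = ord0.
  by rewrite tpermD //; apply: ord_neq; rewrite ?inord_pred_val /=; lia.
by exists (t @: S), (p * t)%g => x; rewrite /= Hp gen_imgS // alpha_conj0 ?alpha_mapM.
Qed.

Lemma ev_no_t1_finite : exists L : seq (W m.+2 -> W m.+2),
  forall u, (forall k, k \in u -> nat_of_ord k != 1) ->
    exists2 i, i < size L & forall x, ev u x = nth id L i x.
Proof.
pose e := enum {: {set 'I_m.+2} * {perm 'I_m.+2}}.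
pose F (q : {set 'I_m.+2} * {perm 'I_m.+2}) x := conj0_map q.1 (alpha_map q.2 x).
exists (map F e) => u no1; have [S [p Hp]] := ev_conj0_alpha no1.
have Se : (S, p) \in e by rewrite mem_enum.
exists (index (S, p) e); first by rewrite size_map index_mem.
by move=> x; rewrite (nth_map (S, p)) ?index_mem // nth_index.
Qed.

End NoFirstAdjacentTransposition.

Fixpoint lcp n (s t : seq 'I_n) : nat :=
  match s, t with
  | x :: s', y :: t' => if x == y then (lcp s' t').+1 else 0
  | _, _ => 0
  end.

Section Palindromes.
Variable n : nat.
Implicit Types (s t w : seq 'I_n).

Lemma lcp_take s t : take (lcp s t) s = take (lcp s t) t.
Proof. by elim: s t => [|a s IH] [|b t] //=; case: eqP => [->|_] //=; rewrite IH. Qed.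

Lemma lcp_nth (x0 : 'I_n) s t : lcp s t < size s -> lcp s t < size t ->
  nth x0 s (lcp s t) != nth x0 t (lcp s t).
Proof. by elim: s t => [|a s IH] [|b t] //=; case: eqP => [->|/eqP] //=; apply: IH. Qed.

Lemma involution_rev w : reducedb w -> red (w ++ w) = [::] -> rev w = w.
Proof.
move=> wr ww.
have E1 : red (w ++ (w ++ rev w)) = w by rewrite -red_catr red_cat_rev cats0 red_id.
have E2 : red ((w ++ w) ++ rev w) = rev w.
  by rewrite -red_catl ww /= red_id // reduced_rev.
by rewrite -E2 -catA E1.
Qed.

(* the middle two letters of a reduced palindrome of even length would coincide *)
Lemma palindrome_odd_size w : reducedb w -> rev w = w -> w != [::] -> odd (size w).
Proof.
case: w => [//|a w'] wr wrev _; set w := a :: w' in wr wrev *.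
apply: contraT => /negbTE ev; set N := size w in ev.
have NN : N = N./2 + N./2 by rewrite addnn -[LHS]odd_double_half ev.
have half_gt0 : 0 < N./2 by move: NN; rewrite /N /=; lia.
have mid_neq : nth a w N./2.-1 != nth a w N./2.
  by rewrite -{2}(prednK half_gt0); apply: reduced_nth; rewrite // prednK //; lia.
suff mid_eq : nth a w N./2.-1 = nth a w N./2 by rewrite mid_eq eqxx in mid_neq.
rewrite -{1}wrev nth_rev -/N; last by lia.
by congr nth; lia.
Qed.

Lemma palindrome_drop s d : rev s = s -> d <= size s ->
  drop (size s - d) s = rev (take d s).
Proof.
move=> srev sd; rewrite -[X in drop _ X]srev drop_rev.
by congr (rev (take _ s)); lia.
Qed.

Lemma palindrome_take_inj s t h : rev s = s -> rev t = t ->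
  size s = 2 * h + 1 -> size t = 2 * h + 1 -> take h.+1 s = take h.+1 t -> s = t.
Proof.
have halves (u : seq 'I_n) : rev u = u -> size u = 2 * h + 1 ->
    u = take h.+1 u ++ rev (take h (take h.+1 u)).
  move=> urev usize; rewrite take_takel // -palindrome_drop // usize; last by lia.
  by rewrite (_ : 2 * h + 1 - h = h.+1) ?cat_take_drop //; lia.
by move=> srev trev ss ts st; rewrite (halves s) // (halves t) // st.
Qed.

(* if the centre of s lies in the common prefix of s and a longer palindrome t,
   then conjugating t by s cancels the whole prefix (rev T) T twice *)
Lemma palindrome_conj_shorter s t a b : rev s = s -> rev t = t ->
  size s = 2 * a + 1 -> size t = 2 * b + 1 -> a < b ->
  take a.+1 t = take a.+1 s -> size (red (s ++ t ++ s)) < size t.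
Proof.
move=> srev trev ss ts ab E.
set T := take a.+1 s; set D := drop a.+1 s; set M := drop a.+1 t.
have sTD : s = T ++ D by rewrite cat_take_drop.
have sDT : s = rev D ++ rev T by rewrite -rev_cat -sTD srev.
have tTM : t = T ++ M by rewrite /T -E cat_take_drop.
have SM : size M = 2 * b - a by rewrite size_drop ts; lia.
have MZ : M = take (size M - a.+1) M ++ rev T.
  rewrite -{1}(cat_take_drop (size M - a.+1) M); congr (_ ++ _).
  rewrite /M drop_drop (_ : size M - a.+1 + a.+1 = size t - a.+1); last by rewrite SM ts; lia.
  by rewrite palindrome_drop ?ts /T ?E //; lia.
set Z := take (size M - a.+1) M in MZ.
have -> : s ++ t ++ s = rev D ++ (rev T ++ T) ++ (Z ++ (rev T ++ T) ++ D).
  by rewrite {1}sDT tTM MZ sTD !catA.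
rewrite (@red_cat_congr _ _ _ _ [::]) ?red_rev_cat //= catA.
rewrite (@red_cat_congr _ _ _ _ [::]) ?red_rev_cat //=.
apply: leq_ltn_trans (size_red _) _.
by rewrite !size_cat size_rev /D size_drop ss /Z size_take_min SM ts; lia.
Qed.

End Palindromes.

(* X k stands for the image of s_k, a reduced palindrome with centre at index h k.
   If no X l begins with the first h k + 1 letters of X k, then in X g_1 ... X g_r
   with g reduced the centre of X g_1 is never cancelled, and the reduced length
   is at least r. *)
Section CentreSurvival.
Variables (n : nat) (X : 'I_n -> seq 'I_n) (h : 'I_n -> nat).
Hypothesis X_reduced : forall k, reducedb (X k).
Hypothesis X_rev : forall k, rev (X k) = X k.
Hypothesis X_size : forall k, size (X k) = 2 * h k + 1.
Hypothesis X_centres : forall k l, k != l -> take (h k).+1 (X l) != take (h k).+1 (X k).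

Lemma centre_survival_step i j w : i != j -> reducedb w ->
  take (h j).+1 w = take (h j).+1 (X j) ->
  take (h i).+1 (red (X i ++ w)) = take (h i).+1 (X i) /\ size w < size (red (X i ++ w)).
Proof.
move=> ij wr wj; set s := X i; set c := lcp s w.
have cw : take c s = take c w := lcp_take s w.
have c_hj : c <= h j.
  rewrite leqNgt; apply/negP => lt; have ji : j != i by rewrite eq_sym.
  move/negP: (X_centres ji); apply.
  by rewrite -/s -(take_takel _ lt) cw take_takel // wj.
have c_hi : c <= h i.
  rewrite leqNgt; apply/negP => lt; move/negP: (X_centres ij); apply; apply/eqP/esym.
  rewrite -/s -(take_takel _ lt) cw take_takel //.
  by rewrite -(@take_takel _ (h i).+1 (h j).+1 w) ?wj ?take_takel //; lia.
have ss : size s = 2 * h i + 1 by apply: X_size.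
set Y := drop c s; set Z := drop c w.
have sY : s = rev Y ++ rev (take c s) by rewrite -rev_cat cat_take_drop /s X_rev.
have wZ : w = take c s ++ Z by rewrite cw cat_take_drop.
have RY : rev Y = take (size s - c) s by rewrite /Y rev_drop /s X_rev.
have SY : size (rev Y) = size s - c by rewrite size_rev size_drop.
have red_sw : red (s ++ w) = rev Y ++ Z.
  have -> : s ++ w = rev Y ++ (rev (take c s) ++ take c s) ++ Z.
    by rewrite {1}sY {1}wZ !catA.
  rewrite (@red_cat_congr _ (rev Y) Z _ [::]) ?red_rev_cat // cat0s.
  apply: red_id; case EY : Y => [|y Y']; first by move: SY; rewrite EY /=; lia.
  have revY : reducedb (rcons (rev Y') y).
    by rewrite -rev_cons -EY; apply/reduced_rev/drop_sorted/X_reduced.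
  case EZ : Z => [|z Z']; first by rewrite rev_cons cats0.
  rewrite rev_cons; apply: reduced_rcons_cat => //; first by rewrite -EZ; exact: drop_sorted.
  have -> : y = nth i s c by rewrite -[c]addn0 -nth_drop -/Y EY.
  have -> : z = nth i w c by rewrite -[c]addn0 -nth_drop -/Z EZ.
  apply: lcp_nth; first by rewrite -/c; lia.
  by rewrite -/c ltnNge; apply/negP => cw'; move: EZ; rewrite /Z drop_oversize.
rewrite red_sw; split; last by rewrite size_cat SY /Z size_drop; lia.
by rewrite takel_cat ?SY ?RY ?take_takel //; lia.
Qed.

Lemma centre_survival g i : reducedb (i :: g) ->
  take (h i).+1 (red (flatten (map X (i :: g)))) = take (h i).+1 (X i) /\
  size (i :: g) <= size (red (flatten (map X (i :: g)))).
Proof.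
elim: g i => [|j g IH] i; first by rewrite /= cats0 red_id // X_size; split => //; lia.
rewrite reduced_cons => /andP [jg ij]; have [IH1 IH2] := IH j jg.
rewrite [map X _]/= [flatten _]/= -red_catr.
have [S1 S2] := centre_survival_step ij (red_reduced _) IH1.
by split => //; apply: leq_ltn_trans IH2 S2.
Qed.

End CentreSurvival.

Definition aut_word n (f : W n -> W n) (k : 'I_n) : seq 'I_n := sval (f (wgen k)).
Definition aut_radius n (f : W n -> W n) (k : 'I_n) : nat := (size (aut_word f k))./2.
Definition aut_length n (f : W n -> W n) : nat := \sum_(k < n) size (aut_word f k).

Definition centres_unique n (f : W n -> W n) :=
  [forall k, forall l, (k != l) ==>
     (take (aut_radius f k).+1 (aut_word f l) != take (aut_radius f k).+1 (aut_word f k))].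

Section Automorphisms.
Variables (n : nat) (f : W n -> W n).
Hypothesis f_aut : is_aut f.

Lemma aut_one : f (wone n) = wone n.
Proof. by case: f_aut => f_morph _; apply: wmul_idem; rewrite -f_morph wmul1w. Qed.

Lemma aut_wsubst x : f x = wsubst (aut_word f) x.
Proof.
case: f_aut => f_morph _.
suff fE s : f (mkW s) = mkW (flatten (map (aut_word f) s)) by rewrite -{1}(mkW_val x) fE.
elim: s => [|a s IH]; first exact: aut_one.
by rewrite mkW_cons f_morph IH -(mkW_val (f (wgen a))) wmul_mkW.
Qed.

Lemma aut_word_inv : involutive_subst (aut_word f).
Proof.
case: f_aut => f_morph _ k.
have : wmul (f (wgen k)) (f (wgen k)) = wone n by rewrite -f_morph wgen_sq aut_one.
by move/(congr1 sval).
Qed.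

Lemma aut_word_reduced k : reducedb (aut_word f k).
Proof. by rewrite /aut_word; case: (f (wgen k)). Qed.

Lemma aut_word_inj : injective (aut_word f).
Proof.
case: f_aut => _ [g fK _] k l E.
have : wgen k = wgen l by rewrite -(fK (wgen k)) -(fK (wgen l)); congr g; apply: val_inj.
by move/(congr1 sval) => /= [].
Qed.

Lemma aut_word_neq_nil k : aut_word f k != [::].
Proof.
apply/eqP => E; case: f_aut => _ [g fK _].
have : wgen k = wone n.
  by rewrite -(fK (wgen k)) -(fK (wone n)) aut_one; congr g; apply: val_inj.
by move/(congr1 sval).
Qed.

Lemma aut_word_rev k : rev (aut_word f k) = aut_word f k.
Proof. exact: involution_rev (aut_word_reduced k) (aut_word_inv k). Qed.

Lemma aut_word_size k : size (aut_word f k) = 2 * aut_radius f k + 1.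
Proof.
have := palindrome_odd_size (aut_word_reduced k) (aut_word_rev k) (aut_word_neq_nil k).
by rewrite /aut_radius -{2}(odd_double_half (size _)) => ->; rewrite -mul2n addnC.
Qed.

(* centre survival forces f^-1 (s_a) to be a single letter, so every s_a is the
   image of a generator, and by injectivity every generator goes to a letter *)
Lemma aut_perm_of_centres_unique : centres_unique f ->
  exists p : {perm 'I_n}, forall x, f x = alpha_map p x.
Proof.
move=> /forallP centres.
have X_centres k l : k != l -> take (aut_radius f k).+1 (aut_word f l) !=
                                 take (aut_radius f k).+1 (aut_word f k).
  by move=> kl; have /forallP/(_ l) := centres k; rewrite kl.
have letter_img a : exists i, aut_word f i = [:: a].
  case: f_aut => _ [g fK gK]; have := gK (wgen a); rewrite aut_wsubst /wsubst.
  case E : (sval (g (wgen a))) => [|i l] /= /(congr1 sval) //= fg.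
  have gr : reducedb (i :: l) by rewrite -E; case: (g (wgen a)).
  have [_] := centre_survival aut_word_reduced aut_word_rev aut_word_size X_centres gr.
  case: l {E gr} fg => [|j l] fg; last by rewrite /= fg.
  by exists i; move: fg; rewrite /= cats0 red_id // aut_word_reduced.
pose q a := odflt a [pick i | aut_word f i == [:: a]].
have qP a : aut_word f (q a) = [:: a].
  rewrite /q; case: pickP => [i /eqP //|none].
  by have [i ia] := letter_img a; move: (none i); rewrite ia eqxx.
have q_inj : injective q by move=> a b ab; move: (qP a); rewrite ab qP => [[]].
have [q' _ qK'] := injF_bij q_inj.
pose p0 i := head i (aut_word f i).
have p0E i : aut_word f i = [:: p0 i] by rewrite /p0 -(qK' i) qP.
have p0_inj : injective p0 by move=> i j ij; apply: aut_word_inj; rewrite !p0E ij.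
exists (perm p0_inj) => x; rewrite aut_wsubst alpha_mapE.
by apply: wsubst_ext => k; rewrite p0E permE.
Qed.

Lemma aut_shortening : ~~ centres_unique f ->
  exists k l, k != l /\ size (red (aut_word f k ++ aut_word f l ++ aut_word f k)) <
                        size (aut_word f l).
Proof.
case/forallPn => k /forallPn [l]; rewrite negb_imply negbK => /andP [kl /eqP E].
have Pk := aut_word_rev k; have Pl := aut_word_rev l.
have Sk := aut_word_size k; have Sl := aut_word_size l.
case: (ltngtP (aut_radius f k) (aut_radius f l)) => lt.
- by exists k, l; split => //; apply: palindrome_conj_shorter Pk Pl Sk Sl lt E.
- exists l, k; split; first by rewrite eq_sym.
  have lk : (aut_radius f l).+1 <= (aut_radius f k).+1 by lia.
  apply: palindrome_conj_shorter Pl Pk Sl Sk lt _.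
  by rewrite -(take_takel _ lk) -E take_takel.
- rewrite lt in Sk E; have /aut_word_inj kl' := palindrome_take_inj Pk Pl Sk Sl (esym E).
  by rewrite kl' eqxx in kl.
Qed.

Lemma aut_comp_sigma k l : k != l -> is_aut (f \o sigma_map k l).
Proof.
case: f_aut => f_morph f_bij kl; split=> [x y|] /=; first by rewrite sigma_map_morph f_morph.
by apply: bij_comp f_bij _; exists (sigma_map k l); apply: sigma_mapK.
Qed.

Lemma aut_word_comp_sigma k l j : k != l ->
  aut_word (f \o sigma_map k l) j =
  if j == l then red (aut_word f k ++ aut_word f l ++ aut_word f k) else aut_word f j.
Proof.
case: f_aut => f_morph _ kl.
rewrite /aut_word /= sigma_mapE (wsubst_mkW (sigma_subst_inv _ _)).
rewrite /= /sigma_subst; case: (eqVneq j l) => [_|_]; last by rewrite cats0.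
by rewrite cats0 -[[:: k; l; k]]/([:: k] ++ [:: l] ++ [:: k]) -!wmul_mkW !f_morph /= red_catr.
Qed.

Lemma aut_length_comp_sigma k l : k != l ->
  size (red (aut_word f k ++ aut_word f l ++ aut_word f k)) < size (aut_word f l) ->
  aut_length (f \o sigma_map k l) < aut_length f.
Proof.
move=> kl shorter; rewrite /aut_length (bigD1 l) //= [X in _ < X](bigD1 l) //=.
rewrite aut_word_comp_sigma // eqxx.
under eq_bigr => j jl do rewrite aut_word_comp_sigma // (negbTE jl).
by rewrite ltn_add2r.
Qed.

End Automorphisms.

Definition ev_generated m (f : W m.+2 -> W m.+2) := exists u, forall x, f x = ev u x.

Section Generation.
Variable m : nat.
Implicit Types (f g : W m.+2 -> W m.+2) (a b c k l : 'I_m.+2).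

Lemma ev_generated_comp f g : ev_generated f -> ev_generated g -> ev_generated (f \o g).
Proof. by move=> [u fu] [v gv]; exists (u ++ v) => x; rewrite ev_cat /= fu gv. Qed.

Lemma ev_generated_ext f g : f =1 g -> ev_generated g -> ev_generated f.
Proof. by move=> fg [u gu]; exists u => x; rewrite fg gu. Qed.

Lemma ev_generated_tperm_adj a b : nat_of_ord b = a.+1 -> ev_generated (alpha_map (tperm a b)).
Proof.
move=> ba; have b0 : nat_of_ord b != 0 by rewrite ba.
exists [:: b] => x /=; rewrite gen_imgS //.
by congr (alpha_map (tperm _ _) x); apply: val_inj; rewrite /= inord_pred_val ba.
Qed.

(* (a c) = (b c) (a b) (b c) with b = c - 1, by induction on c - a *)
Lemma ev_generated_tperm_lt a c : nat_of_ord a < c -> ev_generated (alpha_map (tperm a c)).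
Proof.
move: {2}(c - a) (erefl (c - a)) => d; elim: d => [|d IH] in c *; first by lia.
move=> cad ac; have [ca|ca] := eqVneq (nat_of_ord c) a.+1.
  exact: ev_generated_tperm_adj.
have bc : (c.-1 < m.+2)%N by have := ltn_ord c; lia.
pose b : 'I_m.+2 := Ordinal bc.
have cb : nat_of_ord c = b.+1 by rewrite /= prednK //; lia.
have conj : alpha_map (tperm a c) =1
    alpha_map (tperm b c) \o alpha_map (tperm a b) \o alpha_map (tperm b c).
  move=> x /=; rewrite !alpha_mapM; congr alpha_map.
  by rewrite -{1}(tpermV b c) -conjgE tpermJ tpermL tpermD //; apply: ord_neq => /=; lia.
apply: ev_generated_ext conj _; apply: ev_generated_comp; last exact: ev_generated_tperm_adj.
by apply: ev_generated_comp; [exact: ev_generated_tperm_adj | apply: IH => /=; lia].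
Qed.

Lemma ev_generated_tperm a b : ev_generated (alpha_map (tperm a b)).
Proof.
case: (ltngtP (nat_of_ord a) b) => [ab|ba|ab]; first exact: ev_generated_tperm_lt.
  by rewrite tpermC; apply: ev_generated_tperm_lt.
by rewrite (val_inj ab) tperm1; exists [::] => x; rewrite alpha_map1.
Qed.

Lemma ev_generated_alpha (p : {perm 'I_m.+2}) : ev_generated (alpha_map p).
Proof.
have [ts -> _] := prod_tpermP p; elim: ts => [|t ts IH].
  by rewrite big_nil; exists [::] => x; rewrite alpha_map1.
rewrite big_cons; apply: (@ev_generated_ext _ (alpha_map _ \o alpha_map (tperm t.1 t.2))).
  by move=> x /=; rewrite alpha_mapM.
exact: ev_generated_comp IH (ev_generated_tperm _ _).
Qed.

(* sigma_kl is the conjugate of sigma_01 by any permutation p with p 0 = k, p 1 = l *)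
Lemma ev_generated_sigma k l : k != l -> ev_generated (sigma_map k l).
Proof.
move=> kl; pose q := tperm ord0 k; pose p := (tperm (inord 1) (q l) * q)%g.
have ql0 : q l != ord0.
  by apply: contra_neq kl => /(congr1 q); rewrite tpermK tpermL => ->.
have p0 : p ord0 = k.
  by rewrite permM tpermD ?(eq_sym (inord 1)) ?ord0_neq1 // /q tpermL.
have p1 : p (inord 1) = l by rewrite permM tpermL tpermK.
apply: (@ev_generated_ext _ (alpha_map p \o sigma_map ord0 (inord 1) \o alpha_map p^-1)).
  by move=> x /=; rewrite alpha_sigma p0 p1 alpha_mapM mulVg alpha_map1.
apply: ev_generated_comp; last exact: ev_generated_alpha.
apply: ev_generated_comp; first exact: ev_generated_alpha.
by exists [:: ord0] => x /=; rewrite gen_img0.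
Qed.

Lemma aut_ev_generated f : is_aut f -> ev_generated f.
Proof.
move: {2}(aut_length f).+1 (ltnSn (aut_length f)) => N.
elim: N f => [//|N IH] f lenN f_aut.
have [/(aut_perm_of_centres_unique f_aut) [p fp]|] := boolP (centres_unique f).
  exact: ev_generated_ext fp (ev_generated_alpha p).
case/(aut_shortening f_aut) => k [l [kl shorter]].
have [u fu] : ev_generated (f \o sigma_map k l).
  apply: IH (aut_comp_sigma f_aut kl).
  by have := aut_length_comp_sigma f_aut kl shorter; lia.
have [w sw] := ev_generated_sigma kl.
by exists (u ++ w) => x; rewrite ev_cat -sw -fu /= sigma_mapK.
Qed.

End Generation.

Theorem corollary2p2 (m : nat) :
  (* images of generators are automorphisms of W_n, n = m+2 *)
  (forall k : 'I_m.+2, is_aut (gen_img k)) /\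
  (* the assignment respects the defining relations of G (so it extends to
     a homomorphism G -> Aut(W_n)) *)
  (forall u v : seq 'I_m.+2, cox_eq u v -> forall x, ev u x = ev v x) /\
  (* surjectivity *)
  (forall f : W m.+2 -> W m.+2, is_aut f ->
     exists u : seq 'I_m.+2, forall x, f x = ev u x) /\
  (* the subgroup generated by sigma_12 and alpha_(i,i+1), i = 2..n-1
     (images of t_0 and t_k, k >= 2) is finite *)
  (exists L : seq (W m.+2 -> W m.+2),
     forall u : seq 'I_m.+2, (forall k, k \in u -> val k != 1) ->
       exists2 i, i < size L & forall x, ev u x = nth id L i x).
Proof.
split; first exact: gen_img_aut.
split; first exact: ev_cox_eq.
split; first exact: aut_ev_generated.
exact: ev_no_t1_finite.
Qed.
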